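(* Let $p,q$ be distinct propositional variables. The formula $\Box(p\vee q)\to((\neg\Box\neg p\to\Box q)\to\Box q)$ is derivable in $\mathsf{CK}\oplus\mathsf{N}_\Diamond\oplus\mathsf{wCD}$ but not in $\mathsf{CK}$.
   Context: Formulas: $\mathbf{L}$ is generated from a countably infinite set of propositional variables by $\varphi ::= p \mid \bot \mid \varphi\wedge\varphi \mid \varphi\vee\varphi \mid \varphi\to\varphi \mid \Box\varphi \mid \Diamond\varphi$; $\neg\varphi:=\varphi\to\bot$. Axioms: $\mathsf{K}_\Box$: $\Box(\varphi\to\psi)\to(\Box\varphi\to\Box\psi)$; $\mathsf{K}_\Diamond$: $\Box(\varphi\to\psi)\to(\Diamond\varphi\to\Diamond\psi)$; $\mathsf{N}_\Diamond$: $\Diamond\bot\to\bot$; $\mathsf{wCD}$: $\Box(\varphi\vee\psi)\to((\Diamond\varphi\to\Box\psi)\to\Box\psi)$. For a set $\mathsf{Ax}$ of axioms, $\mathsf{CK}\oplus\mathsf{Ax}$ is the relation $\Gamma\vdash_{\mathsf{Ax}}\varphi$ inductively generated by: (Ax) $\Gamma\vdash\varphi$ whenever $\varphi$ is a substitution instance of an axiom of a standard Hilbert axiomatisation of intuitionistic propositional logic, of $\mathsf{K}_\Box$, of $\mathsf{K}_\Diamond$, or of an element of $\mathsf{Ax}$; (El) $\Gamma\vdash\varphi$ if $\varphi\in\Gamma$; (MP) from $\Gamma\vdash\varphi$ and $\Gamma\vdash\varphi\to\psi$ infer $\Gamma\vdash\psi$; (Nec) from $\emptyset\vdash\varphi$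 infer $\Gamma\vdash\Box\varphi$. $\mathsf{CK}$ is the case $\mathsf{Ax}=\emptyset$. A formula is derivable in a logic if $\emptyset\vdash_{\mathsf{Ax}}\varphi$. *)

From Stdlib Require Import Arith.

Inductive form : Type :=
| Var : nat -> form
| Bot : form
| And : form -> form -> form
| Or : form -> form -> form
| Imp : form -> form -> form
| Box : form -> form
| Dia : form -> form.

Definition Neg (a : form) : form := Imp a Bot.

Inductive IPC_axiom : form -> Prop :=
| A1 a b : IPC_axiom (Imp a (Imp b a))
| A2 a b c : IPC_axiom (Imp (Imp a (Imp b c)) (Imp (Imp a b) (Imp a c)))
| A3 a b : IPC_axiom (Imp (And a b) a)
| A4 a b : IPC_axiom (Imp (And a b) b)
| A5 a b : IPC_axiom (Imp a (Imp b (And a b)))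
| A6 a b : IPC_axiom (Imp a (Or a b))
| A7 a b : IPC_axiom (Imp b (Or a b))
| A8 a b c : IPC_axiom (Imp (Imp a c) (Imp (Imp b c) (Imp (Or a b) c)))
| A9 a : IPC_axiom (Imp Bot a).

Inductive CK_axiom : form -> Prop :=
| KBox a b : CK_axiom (Imp (Box (Imp a b)) (Imp (Box a) (Box b)))
| KDia a b : CK_axiom (Imp (Box (Imp a b)) (Imp (Dia a) (Dia b))).

(* N_Dia : Dia Bot -> Bot (no variables, so its only instance is itself). *)
Inductive N_Dia : form -> Prop :=
| NDia_inst : N_Dia (Imp (Dia Bot) Bot).

Inductive wCD : form -> Prop :=
| wCD_inst a b : wCD (Imp (Box (Or a b)) (Imp (Imp (Dia a) (Box b)) (Box b))).

Definition axU (X Y : form -> Prop) : form -> Prop := fun f => X f \/ Y f.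
Definition noAx : form -> Prop := fun _ => False.

Inductive derives (Ax : form -> Prop) : (form -> Prop) -> form -> Prop :=
| d_ipc G f : IPC_axiom f -> derives Ax G f
| d_ck G f : CK_axiom f -> derives Ax G f
| d_ax G f : Ax f -> derives Ax G f
| d_el G f : G f -> derives Ax G f
| d_mp G f g : derives Ax G f -> derives Ax G (Imp f g) -> derives Ax G g
| d_nec G f : derives Ax (fun _ => False) f -> derives Ax G (Box f).

Definition derivable (Ax : form -> Prop) (f : form) : Prop :=
  derives Ax (fun _ => False) f.

(* Derivability: [N_Dia] and [K_Dia] give [Dia p -> ~ Box ~ p], so the hypothesis
   [~ Box ~ p -> Box q] yields [Dia p -> Box q], and [wCD] finishes.
   Non-derivability: CK is sound for birelational Kripke models, and in the model
   with worlds w0 <= w1, w0 R u0, w1 R u1, p true only at u0 and q true only at u1,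
   [Box (p \/ q)] holds at w0, [~ Box ~ p] holds nowhere above w0 (because
   [Box ~ p] holds at w1), yet [Box q] fails at w0. *)

Definition wCD_neg_box (a b : form) : form :=
  Imp (Box (Or a b)) (Imp (Imp (Neg (Box (Neg a))) (Box b)) (Box b)).

Section Deduction.
Variable Ax : form -> Prop.

Lemma derives_imp_refl G a : derives Ax G (Imp a a).
Proof.
  eapply d_mp; [apply d_ipc, (A1 a a) |].
  eapply d_mp; [apply d_ipc, (A1 a (Imp a a)) |].
  apply d_ipc, A2.
Qed.

Lemma derives_imp_trans G a b c :
  derives Ax G (Imp a b) -> derives Ax G (Imp b c) -> derives Ax G (Imp a c).
Proof.
  intros Hab Hbc.
  eapply d_mp; [exact Hab |].
  eapply d_mp; [| apply d_ipc, A2].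
  eapply d_mp; [exact Hbc | apply d_ipc, A1].
Qed.

Lemma deduction G a f :
  derives Ax (fun x => G x \/ x = a) f -> derives Ax G (Imp a f).
Proof.
  intro H. remember (fun x => G x \/ x = a) as Ga eqn:E. revert G E.
  induction H as [? f Hf | ? f Hf | ? f Hf | ? f Hf | ? f g _ IHf _ IHfg
                 | ? f Hf _]; intros G0 E; subst.
  1-3, 6: eapply d_mp; [| apply d_ipc, A1]; now constructor.
  - destruct Hf as [Hf | ->]; [| apply derives_imp_refl].
    eapply d_mp; [apply d_el, Hf | apply d_ipc, A1].
  - eapply d_mp; [apply (IHf G0 eq_refl) |].
    eapply d_mp; [apply (IHfg G0 eq_refl) | apply d_ipc, A2].
Qed.

Hypothesis N_Dia_in_Ax : forall f, N_Dia f -> Ax f.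
Hypothesis wCD_in_Ax : forall f, wCD f -> Ax f.

Lemma derives_dia_neg_box_neg G a : derives Ax G (Imp (Dia a) (Neg (Box (Neg a)))).
Proof.
  apply deduction, deduction.
  eapply d_mp; [| apply d_ax, N_Dia_in_Ax, NDia_inst].
  eapply d_mp; [apply d_el; left; right; reflexivity |].
  eapply d_mp; [apply d_el; right; reflexivity | apply d_ck, KDia].
Qed.

Lemma derivable_wCD_neg_box a b : derivable Ax (wCD_neg_box a b).
Proof.
  apply deduction, deduction.
  assert (Hdia : derives Ax
    (fun x => ((fun _ => False) x \/ x = Box (Or a b)) \/
              x = Imp (Neg (Box (Neg a))) (Box b))
    (Imp (Dia a) (Box b))).
  { eapply derives_imp_trans; [apply derives_dia_neg_box_neg |].
    apply d_el; right; reflexivity. }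
  eapply d_mp; [exact Hdia |].
  eapply d_mp; [apply d_el; left; right; reflexivity |].
  apply d_ax, wCD_in_Ax, wCD_inst.
Qed.

End Deduction.

Section BirelationalModel.
Variables (W : Type) (le R : W -> W -> Prop) (val : nat -> W -> Prop).
Hypothesis le_refl : forall w, le w w.
Hypothesis le_trans : forall w v x, le w v -> le v x -> le w x.
Hypothesis val_mono : forall n w v, le w v -> val n w -> val n v.

Fixpoint forces (w : W) (f : form) : Prop :=
  match f with
  | Var n => val n w
  | Bot => False
  | And a b => forces w a /\ forces w b
  | Or a b => forces w a \/ forces w b
  | Imp a b => forall v, le w v -> forces v a -> forces v b
  | Box a => forall v x, le w v -> R v x -> forces x a
  | Dia a => forall v, le w v -> exists x, R v x /\ forces x a
  end.

Lemma forces_mono f w v : le w v -> forces w f -> forces v f.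
Proof.
  revert w v; induction f; simpl; intros w v Hwv Hw; eauto.
  - destruct Hw; split; eauto.
  - destruct Hw; [left | right]; eauto.
Qed.

Definition valid (f : form) : Prop := forall w, forces w f.

Lemma IPC_axiom_valid f : IPC_axiom f -> valid f.
Proof.
  intros Hf w; destruct Hf as [a b | a b c | a b | a b | a b | a b | a b | a b c | a];
    simpl.
  - intros v _ Ha v' Hvv' _. exact (forces_mono a v v' Hvv' Ha).
  - intros v1 _ Habc v2 H12 Hab v3 H23 Ha.
    exact (Habc v3 (le_trans _ _ _ H12 H23) Ha v3 (le_refl v3) (Hab v3 H23 Ha)).
  - intros v _ [Ha _]; exact Ha.
  - intros v _ [_ Hb]; exact Hb.
  - intros v _ Ha v' Hvv' Hb. split; [exact (forces_mono a v v' Hvv' Ha) | exact Hb].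
  - intros v _ Ha; left; exact Ha.
  - intros v _ Hb; right; exact Hb.
  - intros v1 _ Hac v2 H12 Hbc v3 H23 [Ha | Hb].
    + exact (Hac v3 (le_trans _ _ _ H12 H23) Ha).
    + exact (Hbc v3 H23 Hb).
  - intros v _ [].
Qed.

Lemma CK_axiom_valid f : CK_axiom f -> valid f.
Proof.
  intros [a b | a b] w; simpl; intros v1 _ Hab v2 H12 Ha.
  - intros v x H2v Hvx. eapply (Hab v x); eauto.
  - intros v H2v. destruct (Ha v H2v) as [x [Hvx Hx]].
    exists x. split; [exact Hvx |]. eapply (Hab v x); eauto.
Qed.

Lemma CK_sound G f : derives noAx G f -> (forall g, G g -> valid g) -> valid f.
Proof.
  induction 1 as [? f Hf | ? f Hf | ? f [] | ? f Hf | ? f g _ IHf _ IHfg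
                 | ? f _ IHf]; intros HG w.
  - now apply IPC_axiom_valid.
  - now apply CK_axiom_valid.
  - now apply HG.
  - apply (IHfg HG w w (le_refl w)), IHf, HG.
  - simpl; intros; apply IHf; intros _ [].
Qed.

Lemma CK_derivable_valid f : derivable noAx f -> valid f.
Proof. intro H; apply (CK_sound _ _ H); intros _ []. Qed.

End BirelationalModel.

Inductive world := w0 | w1 | u0 | u1.

Section Countermodel.
Variables p q : nat.
Hypothesis p_neq_q : p <> q.

Definition cm_le (x y : world) : Prop := x = y \/ (x = w0 /\ y = w1).
Definition cm_R (x y : world) : Prop := (x = w0 /\ y = u0) \/ (x = w1 /\ y = u1).
Definition cm_val (n : nat) (x : world) : Prop := (n = p /\ x = u0) \/ (n = q /\ x = u1).

Let cm_forces := forces world cm_le cm_R cm_val.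

Lemma cm_le_refl x : cm_le x x.
Proof. now left. Qed.

Lemma cm_le_trans x y z : cm_le x y -> cm_le y z -> cm_le x z.
Proof. unfold cm_le; intros [-> | [-> ->]] [-> | [? ->]]; auto; discriminate. Qed.

Lemma cm_val_mono n x y : cm_le x y -> cm_val n x -> cm_val n y.
Proof. unfold cm_le, cm_val; intros [-> | [-> ->]] [[? ?] | [? ?]]; auto; discriminate. Qed.

Lemma cm_forces_box_or : cm_forces w0 (Box (Or (Var p) (Var q))).
Proof.
  intros v x [<- | [_ ->]] [[? ->] | [? ->]]; try discriminate; simpl;
    unfold cm_val; auto.
Qed.

Lemma cm_not_forces_box_q : ~ cm_forces w0 (Box (Var q)).
Proof.
  intro H. destruct (H w0 u0 (cm_le_refl _) (or_introl (conj eq_refl eq_refl)))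
    as [[? _] | [_ ?]]; [congruence | discriminate].
Qed.

Lemma cm_forces_box_neg_p : cm_forces w1 (Box (Neg (Var p))).
Proof.
  intros v x [<- | [? _]] [[? _] | [_ ->]]; try discriminate.
  intros y [<- | [? _]] [[_ ?] | [? _]]; try discriminate; congruence.
Qed.

Lemma cm_forces_hyp : cm_forces w0 (Imp (Neg (Box (Neg (Var p)))) (Box (Var q))).
Proof.
  intros v Hv Hnot. exfalso.
  apply (Hnot w1); [| exact cm_forces_box_neg_p].
  destruct Hv as [<- | [_ ->]]; [right; auto | apply cm_le_refl].
Qed.

Lemma cm_refutes_wCD_neg_box : ~ cm_forces w0 (wCD_neg_box (Var p) (Var q)).
Proof.
  intro H. apply cm_not_forces_box_q.
  exact (H w0 (cm_le_refl _) cm_forces_box_or w0 (cm_le_refl _) cm_forces_hyp).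
Qed.

End Countermodel.

Theorem mainTheorem19 (p q : nat) (hpq : p <> q) :
  derivable (axU N_Dia wCD)
    (Imp (Box (Or (Var p) (Var q)))
         (Imp (Imp (Neg (Box (Neg (Var p)))) (Box (Var q))) (Box (Var q))))
  /\
  ~ derivable noAx
    (Imp (Box (Or (Var p) (Var q)))
         (Imp (Imp (Neg (Box (Neg (Var p)))) (Box (Var q))) (Box (Var q)))).
Proof.
  split.
  - apply (derivable_wCD_neg_box (axU N_Dia wCD)); intros f Hf; [left | right]; exact Hf.
  - intro H.
    apply (cm_refutes_wCD_neg_box p q hpq).
    apply (CK_derivable_valid _ _ _ _ cm_le_refl cm_le_trans (cm_val_mono p q) _ H).
Qed.
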